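(* Let $n\geq 2$ and let $(x_i,y_i)_{i=1}^n$ be labeled examples with $x_i\in\mathbb{R}^d$, $y_i\in\{-1,+1\}$, $\max_i\|x_i\|\leq 1$. Let $X=[x_1,\dots,x_n]$, $\sigma^2\geq\frac{1}{n}\|X\|^2$ (spectral norm), $\lambda>0$, $b\in\{1,\dots,n\}$, and $\beta_b := 1+\frac{(b-1)(n\sigma^2-1)}{n-1}$. Define the primal objective $P(w) := \frac{1}{n}\sum_{i=1}^n\max\{0,1-y_i\langle w,x_i\rangle\}+\frac{\lambda}{2}\|w\|^2$ with minimizer $w^*$, the dual objective $D(\alpha) := -\frac{1}{2\lambda n^2}\alpha^\top Q\alpha + \frac{1}{n}\sum_{i=1}^n\alpha_i$ for $\alpha\in[0,1]^n$, where $Q_{ij} = y_iy_j\langle x_i,x_j\rangle$, and $w(\alpha) := \frac{1}{\lambda n}\sum_{i=1}^n\alpha_iy_ix_i$. Consider mini-batched SDCA: $\alpha^{(0)}=0$, and for $t=0,1,2,\dots$, draw $A_t$ uniformly at random among subsets of $\{1,\dots,n\}$ of cardinality $b$ (independently across iterations), and set $$\alpha^{(t+1)}_i = \alpha^{(t)}_i + \mathrm{clip}_{[-\alpha_i^{(t)},\,1-\alpha_i^{(t)}]}\left(\frac{\lambda n\big(1-y_i\langle w(\alpha^{(t)}),x_i\rangle\big)}{\beta_b}\right)\ \text{ for } i\in A_t,\qquad \alpha^{(t+1)}_j=\alpha^{(t)}_j\ \text{ for } j\notin A_t,$$ where $\mathrm{clip}_I$ denotes projection onto the interval $I$. Let $\epsilon>0$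 and let integers $t_0, T_0, T$ satisfy $$t_0\geq\max\Big\{0,\Big\lceil\frac{n}{b}\log\Big(\frac{2\lambda n}{\beta_b}\Big)\Big\rceil\Big\},\quad T_0\geq t_0+\frac{\beta_b}{b}\Big[\frac{4}{\lambda\epsilon}-\frac{2n}{\beta_b}\Big]_+,\quad T\geq T_0+\max\Big\{\Big\lceil\frac{n}{b}\Big\rceil,\frac{\beta_b}{b}\frac{1}{\lambda\epsilon}\Big\},$$ where $[z]_+=\max\{0,z\}$, and let $\bar\alpha := \frac{1}{T-T_0}\sum_{t=T_0}^{T-1}\alpha^{(t)}$. Then $$\mathbb{E}[P(w(\bar\alpha))] - P(w^* ) \leq \mathbb{E}[P(w(\bar\alpha)) - D(\bar\alpha)] \leq \epsilon.$$
   Context: $\|X\|$ is the spectral norm of $X$; the expectation is over the random mini-batches. *)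

From HB Require Import structures.
From mathcomp Require Import all_boot all_order all_algebra.
From mathcomp Require Import classical_sets reals exp.
Set Implicit Arguments. Unset Strict Implicit. Unset Printing Implicit Defensive.
Import Order.TTheory GRing.Theory Num.Theory.
Local Open Scope ring_scope.
Local Open Scope classical_set_scope.

Section SDCA.
Variable R : realType.

Definition dotv d (u v : 'rV[R]_d) : R := \sum_(k < d) u 0 k * v 0 k.
Definition normv d (u : 'rV[R]_d) : R := Num.sqrt (dotv u u).

Definition normc p (u : 'cV[R]_p) : R := Num.sqrt (\sum_(k < p) u k 0 ^+ 2).

Definition specnorm p q (A : 'M[R]_(p, q)) : R :=
  sup [set normc (A *m u) | u in [set u : 'cV[R]_q | normc u <= 1]].

Definition Xmat n d (x : 'I_n -> 'rV[R]_d) : 'M[R]_(d, n) :=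
  \matrix_(k < d, i < n) x i 0 k.

Definition Pobj n d (x : 'I_n -> 'rV[R]_d) (y : 'I_n -> R) (lam : R)
  (w : 'rV[R]_d) : R :=
  n%:R^-1 * \sum_(i < n) Num.max 0 (1 - y i * dotv w (x i))
  + lam / 2 * normv w ^+ 2.

Definition Qmat n d (x : 'I_n -> 'rV[R]_d) (y : 'I_n -> R) (i j : 'I_n) : R :=
  y i * y j * dotv (x i) (x j).

Definition Dobj n d (x : 'I_n -> 'rV[R]_d) (y : 'I_n -> R) (lam : R)
  (a : 'I_n -> R) : R :=
  - (2 * lam * n%:R ^+ 2)^-1 * (\sum_(i < n) \sum_(j < n) a i * Qmat x y i j * a j)
  + n%:R^-1 * \sum_(i < n) a i.

Definition wof n d (x : 'I_n -> 'rV[R]_d) (y : 'I_n -> R) (lam : R)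
  (a : 'I_n -> R) : 'rV[R]_d :=
  (lam * n%:R)^-1 *: \sum_(i < n) (a i * y i) *: x i.

Definition clip (lo hi z : R) : R := Num.min hi (Num.max lo z).

Definition beta (n b : nat) (sigma : R) : R :=
  1 + (b%:R - 1) * (n%:R * sigma ^+ 2 - 1) / (n%:R - 1).

Definition sdca_step n d (x : 'I_n -> 'rV[R]_d) (y : 'I_n -> R) (lam bet : R)
  (A : {set 'I_n}) (a : 'I_n -> R) : 'I_n -> R :=
  fun i => if i \in A then
             a i + clip (- a i) (1 - a i)
                     (lam * n%:R * (1 - y i * dotv (wof x y lam a) (x i)) / bet)
           else a i.

Fixpoint alpha_it n d (x : 'I_n -> 'rV[R]_d) (y : 'I_n -> R) (lam bet : R)
  (As : nat -> {set 'I_n}) (t : nat) : 'I_n -> R :=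
  match t with
  | 0 => fun _ => 0
  | t'.+1 => sdca_step x y lam bet (As t') (alpha_it x y lam bet As t')
  end.

Definition batch_of n T (s : {ffun 'I_T -> {set 'I_n}}) (t : nat) : {set 'I_n} :=
  match @insub _ (fun k => k < T)%N 'I_T t with Some k => s k | None => finset.set0 end.

Definition alpha_bar n d (x : 'I_n -> 'rV[R]_d) (y : 'I_n -> R) (lam bet : R)
  (T0 T : nat) (s : {ffun 'I_T -> {set 'I_n}}) : 'I_n -> R :=
  fun i => (T%:R - T0%:R)^-1 *
           \sum_(T0 <= t < T) alpha_it x y lam bet (batch_of s) t i.

(* the sample space: T independent batches, each a b-subset of {1..n}, uniform *)
Definition batch_seqs n b T : {set {ffun 'I_T -> {set 'I_n}}} :=
  [set s : {ffun 'I_T -> {set 'I_n}} | [forall k, #|s k| == b]].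

Definition Expect n b T (f : {ffun 'I_T -> {set 'I_n}} -> R) : R :=
  (#|batch_seqs n b T|%:R)^-1 * \sum_(s in batch_seqs n b T) f s.

End SDCA.

(* Each mini-batch step of SDCA maximizes, coordinatewise, a separable
   quadratic lower model of the dual increase.  The model is valid in
   expectation over the batch by the expected separable overapproximation
   E |w(1_A h)|^2 <= (b/n) beta_b |h|^2 / (lam n)^2, which combines
   |x_i| <= 1 on the diagonal of the Gram matrix with |X|^2 <= n sigma^2 off
   it.  Comparing with a partial move towards the hinge subgradient gives,
   for every s in [0, 1],
     E D(alpha^(t+1)) >= E D(alpha^(t)) + (b/n) (s E gap_t - beta_b s^2 / (2 lam n)).
   For e_t = P(w* ) - E D(alpha^(t)) <= E gap_t, the choice s = 1 makes e_t
   decrease linearly to beta_b / (lam n) within t0 steps, s = 2n / (2n + b (t - t0))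
   gives the O(1/t) rate up to T0, and summing with a constant s over
   T0 <= t < T, together with the convexity of the duality gap, bounds the
   gap of the averaged iterate. *)

From HB Require Import structures.
From mathcomp Require Import all_boot all_order all_algebra perm.
From mathcomp Require Import classical_sets reals exp sequences.
From mathcomp Require Import ring lra.
Import Order.TTheory GRing.Theory Num.Theory.
Local Open Scope ring_scope.
Set Implicit Arguments. Unset Strict Implicit. Unset Printing Implicit Defensive.

Section Dot.
Variables (R : realType) (d : nat).
Implicit Types u v w : 'rV[R]_d.

Lemma dotvC u v : dotv u v = dotv v u.
Proof. by apply: eq_bigr => k _; rewrite mulrC. Qed.

Lemma dotv0l v : dotv 0 v = 0.
Proof. by rewrite /dotv big1 // => k _; rewrite mxE mul0r. Qed.

Lemma dotvDl u1 u2 v : dotv (u1 + u2) v = dotv u1 v + dotv u2 v.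
Proof. by rewrite /dotv -big_split; apply: eq_bigr => k _; rewrite mxE mulrDl. Qed.

Lemma dotvDr u v1 v2 : dotv u (v1 + v2) = dotv u v1 + dotv u v2.
Proof. by rewrite dotvC dotvDl !(dotvC _ u). Qed.

Lemma dotvZl c u v : dotv (c *: u) v = c * dotv u v.
Proof. by rewrite /dotv mulr_sumr; apply: eq_bigr => k _; rewrite mxE mulrA. Qed.

Lemma dotvBl u1 u2 v : dotv (u1 - u2) v = dotv u1 v - dotv u2 v.
Proof. by rewrite /dotv -sumrB; apply: eq_bigr => k _; rewrite !mxE mulrBl. Qed.

Lemma dotv_suml (I : Type) (r : seq I) (P : pred I) (u : I -> 'rV[R]_d) v :
  dotv (\sum_(i <- r | P i) u i) v = \sum_(i <- r | P i) dotv (u i) v.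
Proof.
elim: r => [|i r IH]; first by rewrite !big_nil dotv0l.
by rewrite !big_cons; case: (P i); rewrite ?dotvDl IH.
Qed.

Lemma dotv_sumZl (I : Type) (r : seq I) (c : I -> R) (u : I -> 'rV[R]_d) v :
  dotv (\sum_(i <- r) c i *: u i) v = \sum_(i <- r) c i * dotv (u i) v.
Proof. by rewrite dotv_suml; apply: eq_bigr => i _; rewrite dotvZl. Qed.

Lemma dotv_ge0 u : 0 <= dotv u u.
Proof. by apply: sumr_ge0 => k _; rewrite -expr2 sqr_ge0. Qed.

Lemma normv_sqr u : normv u ^+ 2 = dotv u u.
Proof. by rewrite /normv sqr_sqrtr // dotv_ge0. Qed.

End Dot.

Section Clip.
Variable R : realType.
Implicit Types lo hi z : R.

Lemma clip_in lo hi z : lo <= hi -> lo <= clip lo hi z <= hi.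
Proof.
by move=> le_lohi; rewrite /clip; case: (lerP z lo); case: (lerP hi _);
  move=> *; apply/andP; split; lra.
Qed.

Lemma le_quadratic_clip lo hi c k t : lo <= hi -> 0 < k -> lo <= t <= hi ->
  c * t - k / 2 * t ^+ 2
    <= c * clip lo hi (c / k) - k / 2 * clip lo hi (c / k) ^+ 2.
Proof.
move=> le_lohi k_gt0 /andP[lo_t t_hi]; set m := c / k.
have -> : c = k * m by rewrite /m mulrC divfK // gt_eqF.
rewrite /clip; case: (lerP m lo) => ?; case: (lerP hi _) => ?.
- by have -> : t = hi by lra.
- have : 0 <= k * ((t - lo) * (t + lo - 2 * m)) by rewrite !mulr_ge0 //; lra.
  nra.
- have : 0 <= k * ((hi - t) * (2 * m - hi - t)) by rewrite !mulr_ge0 //; lra.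
  nra.
- have : 0 <= k * (t - m) ^+ 2 by rewrite mulr_ge0 ?sqr_ge0 //; lra.
  nra.
Qed.

End Clip.

Definition in01 (R : realType) n (a : 'I_n -> R) := forall i, 0 <= a i <= 1.

Section Duality.
Variables (R : realType) (n d : nat) (x : 'I_n -> 'rV[R]_d) (y : 'I_n -> R).
Variable lam : R.
Hypotheses (lam_gt0 : 0 < lam) (n_gt0 : (0 < n)%N).

Local Notation W := (wof x y lam).
Local Notation D := (Dobj x y lam).
Local Notation P := (Pobj x y lam).

Let nR_gt0 : 0 < n%:R :> R. Proof. by rewrite ltr0n. Qed.
Let lam_n_neq0 : lam * n%:R != 0. Proof. by rewrite mulf_neq0 // gt_eqF. Qed.

Definition slack (a : 'I_n -> R) i := 1 - y i * dotv (W a) (x i).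

Lemma dotv_wofl a u :
  dotv (W a) u = (lam * n%:R)^-1 * \sum_i a i * y i * dotv (x i) u.
Proof. by rewrite /wof dotvZl dotv_sumZl. Qed.

Lemma dotv_wofr a u :
  dotv u (W a) = (lam * n%:R)^-1 * \sum_i a i * y i * dotv u (x i).
Proof. by rewrite dotvC dotv_wofl; under eq_bigr do rewrite dotvC. Qed.

Lemma wofD a h : W (fun i => a i + h i) = W a + W h.
Proof.
rewrite /wof -scalerDr -big_split; congr (_ *: _).
by apply: eq_bigr => i _; rewrite mulrDl scalerDl.
Qed.

Lemma DobjE a : D a = - (lam / 2) * dotv (W a) (W a) + n%:R^-1 * \sum_i a i.
Proof.
rewrite /Dobj dotv_wofl; congr (_ + _).
have -> : \sum_i a i * y i * dotv (x i) (W a) =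
    (lam * n%:R)^-1 * \sum_i \sum_j a i * Qmat x y i j * a j.
  rewrite mulr_sumr; apply: eq_bigr => i _; rewrite dotv_wofr mulrCA.
  by congr (_ * _); rewrite mulr_sumr; apply: eq_bigr => j _; rewrite /Qmat; ring.
by field; rewrite gt_eqF //= gt_eqF.
Qed.

Lemma Dobj_shift a h :
  D (fun i => a i + h i) =
  D a + n%:R^-1 * \sum_i h i * slack a i - lam / 2 * dotv (W h) (W h).
Proof.
rewrite !DobjE wofD dotvDl !dotvDr (dotvC (W h) (W a)) [dotv (W a) (W h)]dotv_wofr.
have -> : \sum_i h i * slack a i = \sum_i h i - \sum_i h i * y i * dotv (W a) (x i).
  by rewrite -sumrB; apply: eq_bigr => i _; rewrite /slack; ring.
by rewrite big_split /=; field; rewrite gt_eqF //= gt_eqF.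
Qed.

Lemma sum_mul_slack a :
  \sum_i a i * slack a i = \sum_i a i - lam * n%:R * dotv (W a) (W a).
Proof.
rewrite [dotv (W a) (W a)]dotv_wofr mulrA mulfV // mul1r -sumrB.
by apply: eq_bigr => i _; rewrite /slack; ring.
Qed.

(* Weak duality: the cross term [lam <w, w(a)>] is absorbed by completing
   the square [0 <= lam / 2 * |w - w(a)|^2]. *)
Lemma Dobj_le_Pobj a w : in01 a -> D a <= P w.
Proof.
move=> a01; rewrite DobjE /Pobj normv_sqr.
set hinge := \sum_i Num.max 0 (1 - y i * dotv w (x i)).
have le_hinge : \sum_i a i - lam * n%:R * dotv w (W a) <= hinge.
  rewrite dotv_wofr mulrA mulfV // mul1r -sumrB; apply: ler_sum => i _.
  have /andP[a0 a1] := a01 i.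
  by case: (lerP 0 (1 - y i * dotv w (x i))) => ?; nra.
have ninv_ge0 : 0 <= n%:R^-1 :> R by rewrite invr_ge0 ltW.
have := ler_wpM2l ninv_ge0 le_hinge.
have -> : n%:R^-1 * (\sum_i a i - lam * n%:R * dotv w (W a)) =
    n%:R^-1 * \sum_i a i - lam * dotv w (W a) by field; rewrite gt_eqF.
have sq_ge0 := mulr_ge0 (ltW lam_gt0) (dotv_ge0 (w - W a)).
rewrite !dotvBl !(dotvC _ (w - W a)) !dotvBl (dotvC (W a) w) in sq_ge0.
nra.
Qed.

Definition duality_gap a := P (W a) - D a.

Lemma duality_gapE a : duality_gap a =
  n%:R^-1 * \sum_i Num.max 0 (slack a i) + lam * dotv (W a) (W a)
  - n%:R^-1 * \sum_i a i.
Proof. by rewrite /duality_gap DobjE /Pobj normv_sqr; field; rewrite gt_eqF. Qed.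

Variable bet : R.
Hypothesis bet_gt0 : 0 < bet.

Definition sdca_delta a i := clip (- a i) (1 - a i) (lam * n%:R * slack a i / bet).

(* Lower model of the increase of [D] when [a] moves by [h]; the expected
   separable overapproximation bounds the quadratic term of [Dobj_shift]. *)
Definition dual_model a h :=
  n%:R^-1 * \sum_i h i * slack a i - bet / (2 * lam * n%:R ^+ 2) * \sum_i h i ^+ 2.

Lemma dual_model_le_delta a h : (forall i, - a i <= h i <= 1 - a i) ->
  dual_model a h <= dual_model a (sdca_delta a).
Proof.
move=> h_box; rewrite /dual_model !mulr_sumr -!sumrB; apply: ler_sum => i _.
have k_gt0 : 0 < bet / (lam * n%:R) by rewrite divr_gt0 // mulr_gt0.
have box_ne : - a i <= 1 - a i by have /andP[] := h_box i; lra.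
have := le_quadratic_clip (slack a i) box_ne k_gt0 (h_box i).
have -> : slack a i / (bet / (lam * n%:R)) = lam * n%:R * slack a i / bet.
  by field; rewrite !gt_eqF.
have scale t : n%:R^-1 * (t * slack a i) - bet / (2 * lam * n%:R ^+ 2) * t ^+ 2
    = n%:R^-1 * (slack a i * t - bet / (lam * n%:R) / 2 * t ^+ 2).
  by field; rewrite !gt_eqF.
by rewrite !scale ler_pM2l ?invr_gt0 // -/(sdca_delta a i).
Qed.

Definition hinge_direction a i := (0 < slack a i)%R%:R - a i.

(* [(0 < slack a i)%:R] attains the hinge loss at [w(a)], so the linear term
   of the model is [s] times the duality gap. *)
Lemma dual_model_hinge_direction a s : in01 a -> 0 <= s <= 1 ->
  s * duality_gap a - bet * s ^+ 2 / (2 * lam * n%:R)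
    <= dual_model a (fun i => s * hinge_direction a i).
Proof.
move=> a01 /andP[s0 s1]; rewrite /dual_model duality_gapE.
have -> : \sum_i s * hinge_direction a i * slack a i =
    s * (\sum_i Num.max 0 (slack a i) - \sum_i a i * slack a i).
  rewrite -sumrB mulr_sumr; apply: eq_bigr => i _; rewrite /hinge_direction.
  by case: (lerP (slack a i) 0) => ? /=; rewrite ?mulr0n ?mulr1n; ring.
have sq_le : \sum_i (s * hinge_direction a i) ^+ 2 <= \sum_(i < n) s ^+ 2.
  apply: ler_sum => i _; have /andP[a0 a1] := a01 i.
  rewrite exprMn ler_piMr ?sqr_ge0 // /hinge_direction.
  by case: (0 < slack a i); rewrite /= ?mulr1n ?mulr0n; nra.
rewrite sumr_const card_ord -mulr_natr in sq_le.
have coef_gt0 : 0 < bet / (2 * lam * n%:R ^+ 2).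
  by rewrite divr_gt0 // !mulr_gt0 // exprn_gt0.
have := ler_wpM2l (ltW coef_gt0) sq_le.
rewrite sum_mul_slack.
have -> : bet / (2 * lam * n%:R ^+ 2) * (s ^+ 2 * n%:R) =
    bet * s ^+ 2 / (2 * lam * n%:R) by field; rewrite !gt_eqF.
suff -> : s * (n%:R^-1 * \sum_i Num.max 0 (slack a i) + lam * dotv (W a) (W a)
    - n%:R^-1 * \sum_i a i) = n%:R^-1 * (s * (\sum_i Num.max 0 (slack a i)
    - (\sum_i a i - lam * n%:R * dotv (W a) (W a)))) by lra.
by field; rewrite gt_eqF.
Qed.

End Duality.

Section Batches.
Variables (R : realFieldType) (n b : nat).

Definition batches := [set A : {set 'I_n} | #|A| == b].
Local Notation S := batches.
Local Notation K := (#|S|%:R : R).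

Lemma card_batches_gt0 : (b <= n)%N -> (0 < #|S|)%N.
Proof. by move=> le_bn; rewrite card_draws card_ord bin_gt0. Qed.

Lemma sum_batches_perm (s : {perm 'I_n}) (F : {set 'I_n} -> R) :
  \sum_(A in S) F A = \sum_(A in S) F (s @: A).
Proof.
rewrite (reindex_inj (imset_inj (@perm_inj _ s))) /=.
by apply: eq_bigl => A; rewrite !inE card_imset //; apply: perm_inj.
Qed.

Definition mem_count i : R := \sum_(A in S) (i \in A)%:R.
Definition mem2_count i j : R := \sum_(A in S) ((i \in A) && (j \in A))%:R.

Lemma sum_mem_card (A : {set 'I_n}) : \sum_i (i \in A)%:R = #|A|%:R :> R.
Proof. by rewrite -sum1_card natr_sum [RHS]big_mkcond; apply: eq_bigr => i _; case: (i \in A). Qed.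

Lemma mem_count_sym i j : mem_count i = mem_count j.
Proof.
rewrite /mem_count (sum_batches_perm (tperm i j)); apply: eq_bigr => A _.
by rewrite -{1}(tpermR i j) mem_imset //; apply: perm_inj.
Qed.

Lemma mem2_count_sym i j j' : j != i -> j' != i -> mem2_count i j = mem2_count i j'.
Proof.
move=> ji j'i; rewrite /mem2_count (sum_batches_perm (tperm j j')); apply: eq_bigr => A _.
rewrite -[X in (_ && (X \in _))](tpermR j j') mem_imset; last exact: perm_inj.
by rewrite -{1}(tpermD ji j'i) mem_imset //; apply: perm_inj.
Qed.

(* Double counting: [\sum_i mem_count i = \sum_(A in S) #|A| = #|S| b]. *)
Lemma mem_countE i : (0 < n)%N -> mem_count i = K * b%:R / n%:R.
Proof.
move=> n_gt0; have nR_neq0 : n%:R != 0 :> R by rewrite pnatr_eq0 -lt0n.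
have : \sum_(j < n) mem_count j = K * b%:R.
  rewrite /mem_count exchange_big /= -sum1_card natr_sum mulr_suml.
  by apply: eq_bigr => A; rewrite inE sum_mem_card => /eqP ->; rewrite mul1r.
rewrite (eq_bigr (fun=> mem_count i)) => [|j _]; last exact: mem_count_sym.
by rewrite sumr_const card_ord => <-; rewrite -(mulr_natr (mem_count i)) mulfK.
Qed.

Lemma mem2_count_diag i : mem2_count i i = mem_count i.
Proof. by apply: eq_bigr => A _; rewrite andbb. Qed.

(* Double counting again, over the pairs [(i, j)] with [j != i]. *)
Lemma mem2_countE i j : (1 < n)%N -> j != i ->
  mem2_count i j = K * b%:R * (b%:R - 1) / (n%:R * (n%:R - 1)).
Proof.
move=> n_gt1 ji; have n_gt0 : (0 < n)%N by apply: ltn_trans n_gt1.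
have nR_gt1 : 1 < n%:R :> R by rewrite ltr1n.
have : \sum_(k < n) mem2_count i k = b%:R * mem_count i.
  rewrite /mem2_count exchange_big /mem_count mulr_sumr.
  apply: eq_bigr => A; rewrite inE => /eqP cardA.
  rewrite -cardA -sum_mem_card mulr_suml; apply: eq_bigr => k _.
  by case: (i \in A); rewrite ?mulr1 ?mulr0.
rewrite (bigD1 i) //= (eq_bigr (fun=> mem2_count i j)) => [|k ki]; last first.
  exact: mem2_count_sym.
have n1_neq0 : n%:R - 1 != 0 :> R by rewrite subr_eq0 gt_eqF.
rewrite sumr_const cardC1 card_ord -(mulr_natr (mem2_count i j)) -subn1 natrB //.
rewrite mem2_count_diag mem_countE // => eq_sum.
have -> : mem2_count i j = (b%:R - 1) * (K * b%:R / n%:R) / (n%:R - 1).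
  by rewrite -[LHS](mulfK n1_neq0); congr (_ / _); lra.
by field; rewrite n1_neq0 gt_eqF // (lt_trans ltr01).
Qed.

Lemma sum_batches_lin (f : 'I_n -> R) : (0 < n)%N ->
  \sum_(A in S) \sum_i (i \in A)%:R * f i = K * b%:R / n%:R * \sum_i f i.
Proof.
move=> n_gt0; rewrite exchange_big mulr_sumr; apply: eq_bigr => i _.
by rewrite -mulr_suml -/(mem_count i) mem_countE.
Qed.

Lemma sum_batches_quad (M : 'I_n -> 'I_n -> R) : (1 < n)%N ->
  let c1 := K * b%:R / n%:R in
  let c2 := K * b%:R * (b%:R - 1) / (n%:R * (n%:R - 1)) in
  \sum_(A in S) \sum_i \sum_j (i \in A)%:R * (j \in A)%:R * M i j
  = (c1 - c2) * \sum_i M i i + c2 * \sum_i \sum_j M i j.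
Proof.
move=> n_gt1 /=; have n_gt0 : (0 < n)%N by apply: ltn_trans n_gt1.
rewrite exchange_big !mulr_sumr -big_split; apply: eq_bigr => i _ /=.
rewrite exchange_big mulr_sumr (bigD1 i) //= [in RHS](bigD1 i) //=.
have -> : \sum_(A in S) (i \in A)%:R * (i \in A)%:R * M i i =
    K * b%:R / n%:R * M i i.
  rewrite -mulr_suml -(mem_countE i n_gt0); congr (_ * _).
  by apply: eq_bigr => A _; case: (i \in A); rewrite ?mulr1 ?mulr0.
under eq_bigr => j ji.
  rewrite -mulr_suml (_ : \sum_(A in S) _ = mem2_count i j).
    by rewrite mem2_countE // over.
  by apply: eq_bigr => A _; case: (i \in A); case: (j \in A); rewrite ?mulr1 ?mulr0.
by rewrite -mulr_sumr; ring.
Qed.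

Lemma batch_weights_ge0 : (1 < n)%N -> (b <= n)%N ->
  let c1 := K * b%:R / n%:R in
  let c2 := K * b%:R * (b%:R - 1) / (n%:R * (n%:R - 1)) in
  0 <= c2 <= c1.
Proof.
move=> n_gt1 b_le_n /=; have nR_gt1 : 1 < n%:R :> R by rewrite ltr1n.
have bn : b%:R <= n%:R :> R by rewrite ler_nat.
have [b0|b_gt0] := posnP b; first by rewrite b0 !mulr0 !mul0r lexx.
have bR_ge1 : 1 <= b%:R :> R by rewrite ler1n.
have Kb_ge0 : 0 <= K * b%:R by rewrite mulr_ge0 ?ler0n.
apply/andP; split.
  by apply: divr_ge0; apply: mulr_ge0 => //; lra.
rewrite -subr_ge0.
have -> : K * b%:R / n%:R - K * b%:R * (b%:R - 1) / (n%:R * (n%:R - 1)) =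
    K * b%:R / n%:R * ((n%:R - b%:R) / (n%:R - 1)).
  by field; rewrite !subr_eq0 !gt_eqF // (lt_trans ltr01).
by apply: mulr_ge0; apply: divr_ge0 => //; lra.
Qed.

End Batches.

Section Spectral.
Local Open Scope classical_set_scope.
Variables (R : realType) (n d : nat) (x : 'I_n -> 'rV[R]_d).
Local Notation X := (Xmat x).
Local Notation ball1 := [set u : 'cV[R]_n | normc u <= 1].

Lemma normc_ge0 p (u : 'cV[R]_p) : 0 <= normc u.
Proof. exact: sqrtr_ge0. Qed.

Lemma normc_sqr p (u : 'cV[R]_p) : normc u ^+ 2 = \sum_k u k 0 ^+ 2.
Proof. by rewrite sqr_sqrtr // sumr_ge0 // => k _; apply: sqr_ge0. Qed.

Lemma normc_le1_coord (u : 'cV[R]_n) i : normc u <= 1 -> `|u i 0| <= 1.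
Proof.
move=> u_le1; have : u i 0 ^+ 2 <= 1.
  have : normc u ^+ 2 <= 1 by have := normc_ge0 u; nra.
  rewrite normc_sqr (bigD1 i) //=; apply: le_trans; rewrite lerDl.
  by apply: sumr_ge0 => k _; apply: sqr_ge0.
rewrite -real_normK ?num_real // => sq_le1.
by have := normr_ge0 (u i 0); nra.
Qed.

Lemma specnorm_has_ubound : has_ubound [set normc (X *m u) | u in ball1].
Proof.
exists (Num.sqrt (\sum_k (\sum_i `|X k i|) ^+ 2)) => _ [u /= u_le1 <-].
rewrite /normc ler_sqrt; last by apply: sumr_ge0 => k _; apply: sqr_ge0.
apply: ler_sum => k _; rewrite -real_normK ?num_real // lerXn2r ?nnegrE //.
  by apply: sumr_ge0 => i _.
rewrite mxE; apply: le_trans (ler_norm_sum _ _ _) _; apply: ler_sum => i _.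
by rewrite normrM ler_piMr // normc_le1_coord.
Qed.

Lemma normc_mulmx_le_specnorm (u : 'cV[R]_n) :
  normc u <= 1 -> normc (X *m u) <= specnorm X.
Proof. by move=> u_le1; apply: (ub_le_sup specnorm_has_ubound); exists u. Qed.

(* Apply the previous bound to the unit vector [g / |g|]. *)
Lemma dotv_comb_le_specnorm (g : 'I_n -> R) :
  dotv (\sum_i g i *: x i) (\sum_i g i *: x i) <= specnorm X ^+ 2 * \sum_i g i ^+ 2.
Proof.
set v := \sum_i g i *: x i; set r2 := \sum_i g i ^+ 2.
have r2_ge0 : 0 <= r2 by apply: sumr_ge0 => i _; apply: sqr_ge0.
have [r2_0|r2_neq0] := eqVneq r2 0.
  have g0 i : g i = 0.
    move/eqP: r2_0; rewrite psumr_eq0 => [/allP/(_ i (mem_index_enum i))|j _].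
      by rewrite /= sqrf_eq0 => /eqP.
    exact: sqr_ge0.
  rewrite r2_0 mulr0 /v big1 ?dotv0l // => i _.
  by rewrite g0 scale0r.
have r2_gt0 : 0 < r2 by rewrite lt_neqAle eq_sym r2_neq0.
set r := Num.sqrt r2; have r_gt0 : 0 < r by rewrite sqrtr_gt0.
set u : 'cV[R]_n := \col_i (r^-1 * g i).
have u_le1 : normc u <= 1.
  rewrite /normc (eq_bigr (fun k => r^-2 * g k ^+ 2)) => [|k _]; last first.
    by rewrite mxE exprMn exprVn.
  by rewrite -mulr_sumr sqr_sqrtr // mulVf ?gt_eqF // sqrtr1.
have le_spec := normc_mulmx_le_specnorm u_le1.
have : normc (X *m u) ^+ 2 <= specnorm X ^+ 2.
  by rewrite lerXn2r ?nnegrE ?normc_ge0 // (le_trans (normc_ge0 _) le_spec).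
have -> : normc (X *m u) ^+ 2 = r^-2 * dotv v v.
  rewrite normc_sqr /dotv mulr_sumr; apply: eq_bigr => k _.
  rewrite -expr2 -exprVn -exprMn !mxE summxE mulr_sumr; congr (_ ^+ 2).
  by apply: eq_bigr => i _; rewrite !mxE; ring.
by rewrite ler_pdivrMl ?exprn_gt0 // sqr_sqrtr // mulrC.
Qed.

End Spectral.

Lemma sumr_const_seq (R : nmodType) (I : Type) (r : seq I) (k : R) :
  \sum_(t <- r) k = k *+ size r.
Proof. by rewrite big_const_seq count_predT; elim: (size r) => //= m ->; rewrite mulrS. Qed.

Lemma mean_weight_iota (R : numFieldType) m p : (m < p)%N ->
  (p%:R - m%:R)^-1 * (size (index_iota m p))%:R = 1 :> R.
Proof.
move=> lt_mp; rewrite size_iota natrB ?(ltnW lt_mp) // mulVf //.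
by rewrite subr_eq0 gt_eqF // ltr_nat.
Qed.

Section Averaging.
Variables (R : realType) (I : Type) (r : seq I) (c : R).
Hypothesis c_mean : c * (size r)%:R = 1.

Let c_ge0 : 0 <= c.
Proof.
case: (lerP 0 c) => // c_lt0.
by have := mulr_le0_ge0 (ltW c_lt0) (ler0n R (size r)); rewrite c_mean ler10.
Qed.

Lemma dotv_mean_le d (u : I -> 'rV[R]_d) :
  dotv (c *: \sum_(t <- r) u t) (c *: \sum_(t <- r) u t)
    <= c * \sum_(t <- r) dotv (u t) (u t).
Proof.
set m := c *: \sum_(t <- r) u t.
have sum_u : \sum_(t <- r) u t = (size r)%:R *: m by rewrite scalerA mulrC c_mean scale1r.
have : 0 <= \sum_(t <- r) dotv (u t - m) (u t - m).
  by apply: sumr_ge0 => t _; apply: dotv_ge0.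
have -> : \sum_(t <- r) dotv (u t - m) (u t - m) = \sum_(t <- r) dotv (u t) (u t)
    - 2 * dotv (\sum_(t <- r) u t) m + (size r)%:R * dotv m m.
  rewrite dotv_suml (mulr_natl (dotv m m)) -sumr_const_seq mulr_sumr -sumrB -big_split /=.
  apply: eq_bigr => t _; rewrite !dotvBl !(dotvC _ (u t - m)) !dotvBl (dotvC m); ring.
rewrite sum_u dotvZl => sq_ge0.
have := ler_wpM2l c_ge0 (_ : (size r)%:R * dotv m m <= \sum_(t <- r) dotv (u t) (u t)).
by rewrite mulrA c_mean mul1r; apply; lra.
Qed.

Lemma in01_mean n (a : I -> 'I_n -> R) : (forall t, in01 (a t)) ->
  in01 (fun i => c * \sum_(t <- r) a t i).
Proof.
move=> a01 i; apply/andP; split.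
  by apply: mulr_ge0 => //; apply: sumr_ge0 => t _; have /andP[] := a01 t i.
rewrite -c_mean -(mulr1 (size r)%:R) mulr_natl -sumr_const_seq ler_wpM2l //.
by apply: ler_sum => t _; have /andP[] := a01 t i.
Qed.

Variables (n d : nat) (x : 'I_n -> 'rV[R]_d) (y : 'I_n -> R) (lam : R).
Hypotheses (lam_gt0 : 0 < lam) (n_gt0 : (0 < n)%N).
Local Notation W := (wof x y lam).

Lemma wof_mean (a : I -> 'I_n -> R) :
  W (fun i => c * \sum_(t <- r) a t i) = c *: \sum_(t <- r) W (a t).
Proof.
rewrite /wof -[in RHS]scaler_sumr [in RHS]scalerA [in RHS]mulrC -[in RHS]scalerA.
congr (_ *: _).
rewrite exchange_big scaler_sumr /=; apply: eq_bigr => i _.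
by rewrite -scaler_suml scalerA -mulrA mulr_suml.
Qed.

(* The duality gap is convex: the hinge part is a convex function of the
   slacks, which are affine in [a], and [|w(a)|^2] is convex. *)
Lemma duality_gap_mean_le (a : I -> 'I_n -> R) :
  duality_gap x y lam (fun i => c * \sum_(t <- r) a t i)
    <= c * \sum_(t <- r) duality_gap x y lam (a t).
Proof.
set ab := fun i => c * \sum_(t <- r) a t i.
have nR_gt0 : 0 < n%:R :> R by rewrite ltr0n.
under [in X in _ <= X]eq_bigr do rewrite duality_gapE //.
rewrite duality_gapE // sumrB big_split /= -!mulr_sumr exchange_big /=.
have hinge_le : \sum_i Num.max 0 (slack x y lam ab i)
    <= c * \sum_(t <- r) \sum_i Num.max 0 (slack x y lam (a t) i).
  rewrite exchange_big mulr_sumr; apply: ler_sum => i _.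
  have -> : slack x y lam ab i = c * \sum_(t <- r) slack x y lam (a t) i.
    rewrite /slack wof_mean dotvZl dotv_suml sumrB mulrBr sumr_const_seq c_mean.
    by rewrite mulr_sumr mulr_sumr mulr_sumr; congr (_ - _); apply: eq_bigr => t _; ring.
  rewrite ge_max; apply/andP; split.
    by apply: mulr_ge0 => //; apply: sumr_ge0 => t _; rewrite le_max lexx.
  by apply: ler_wpM2l => //; apply: ler_sum => t _; rewrite le_max lexx orbT.
have norm_le : dotv (W ab) (W ab) <= c * \sum_(t <- r) dotv (W (a t)) (W (a t)).
  by rewrite wof_mean; apply: dotv_mean_le.
have ninv_ge0 : 0 <= n%:R^-1 :> R by rewrite invr_ge0 ltW.
have := ler_wpM2l ninv_ge0 hinge_le; have := ler_wpM2l (ltW lam_gt0) norm_le.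
rewrite -/ab; set A := \sum_(t <- r) _; set B := \sum_(t <- r) _; set C := \sum_(t <- r) _.
have -> : c * (n%:R^-1 * A + lam * B - n%:R^-1 * C) =
    n%:R^-1 * (c * A) + lam * (c * B) - n%:R^-1 * (c * C) by ring.
by move=> ? ?; apply: lerB => //; apply: lerD.
Qed.

End Averaging.

Section Progress.
Variables (R : realType) (n d : nat) (x : 'I_n -> 'rV[R]_d) (y : 'I_n -> R).
Variables (lam sigma : R) (b : nat).
Hypotheses (lam_gt0 : 0 < lam) (n_gt1 : (1 < n)%N).
Hypothesis b_le_n : (b <= n)%N.
Hypotheses (y2 : forall i, y i ^+ 2 = 1) (x_le1 : forall i, dotv (x i) (x i) <= 1).
Hypothesis spec_le : specnorm (Xmat x) ^+ 2 <= n%:R * sigma ^+ 2.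
Local Notation bet := (beta n b sigma).
Hypothesis bet_gt0 : 0 < bet.

Local Notation W := (wof x y lam).
Local Notation D := (Dobj x y lam).
Local Notation S := (batches n b).
Local Notation K := (#|S|%:R : R).

Let n_gt0 : (0 < n)%N. Proof. exact: ltn_trans n_gt1. Qed.
Let nR_gt1 : 1 < n%:R :> R. Proof. by rewrite ltr1n. Qed.
Let K_gt0 : 0 < K. Proof. by rewrite ltr0n card_batches_gt0. Qed.

Lemma dotv_wof_gram h : dotv (W h) (W h) = (lam * n%:R)^-2 *
  \sum_i \sum_j (h i * y i) * (h j * y j) * dotv (x i) (x j).
Proof.
rewrite /wof dotvZl dotvC dotvZl dotv_sumZl mulrA -expr2 exprVn; congr (_ * _).
apply: eq_bigr => i _; rewrite dotvC dotv_sumZl mulr_sumr.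
by apply: eq_bigr => j _; rewrite dotvC; ring.
Qed.

(* Expected separable overapproximation: the diagonal terms of the Gram
   matrix are bounded by [|x_i| <= 1], the whole matrix by [|X|^2 <= n sigma^2];
   [beta] is exactly the resulting mixture of the two. *)
Lemma expected_separable_overapprox (h : 'I_n -> R) :
  K^-1 * \sum_(A in S) dotv (W (fun i => (i \in A)%:R * h i))
                            (W (fun i => (i \in A)%:R * h i))
  <= b%:R / n%:R * bet * (lam * n%:R)^-2 * \sum_i h i ^+ 2.
Proof.
set M := fun i j => (h i * y i) * (h j * y j) * dotv (x i) (x j).
set H := \sum_i h i ^+ 2; have H_ge0 : 0 <= H by apply: sumr_ge0 => i _; apply: sqr_ge0.
under eq_bigr do rewrite dotv_wof_gram.
have -> : \sum_(A in S) (lam * n%:R)^-2 * \sum_i \sum_j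
    ((i \in A)%:R * h i * y i) * ((j \in A)%:R * h j * y j) * dotv (x i) (x j)
  = (lam * n%:R)^-2 * \sum_(A in S) \sum_i \sum_j (i \in A)%:R * (j \in A)%:R * M i j.
  rewrite mulr_sumr; apply: eq_bigr => A _; congr (_ * _).
  by apply: eq_bigr => i _; apply: eq_bigr => j _; rewrite /M; ring.
rewrite sum_batches_quad //.
have diag_le : \sum_i M i i <= H.
  apply: ler_sum => i _; rewrite /M.
  have -> : h i * y i * (h i * y i) * dotv (x i) (x i) =
      h i ^+ 2 * (y i ^+ 2 * dotv (x i) (x i)) by ring.
  by rewrite y2 mul1r ler_piMr ?sqr_ge0.
have gram_le : \sum_i \sum_j M i j <= n%:R * sigma ^+ 2 * H.
  have -> : \sum_i \sum_j M i j =
      dotv (\sum_i (h i * y i) *: x i) (\sum_i (h i * y i) *: x i).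
    rewrite dotv_sumZl; apply: eq_bigr => i _; rewrite dotvC dotv_sumZl mulr_sumr.
    by apply: eq_bigr => j _; rewrite /M dotvC; ring.
  apply: le_trans (dotv_comb_le_specnorm _ _) _.
  under eq_bigr do rewrite exprMn y2 mulr1.
  by rewrite ler_wpM2r.
have /andP[c2_ge0 c2_le_c1] := batch_weights_ge0 R n_gt1 b_le_n.
set c1 := K * b%:R / n%:R in c2_le_c1 *.
set c2 := K * b%:R * _ / _ in c2_ge0 c2_le_c1 *.
have : (c1 - c2) * \sum_i M i i + c2 * \sum_i \sum_j M i j
    <= (c1 - c2) * H + c2 * (n%:R * sigma ^+ 2 * H).
  by rewrite lerD // ler_wpM2l // subr_ge0.
have -> : (c1 - c2) * H + c2 * (n%:R * sigma ^+ 2 * H) =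
    K * (b%:R / n%:R * bet * H).
  by rewrite /c1 /c2 /beta; field; rewrite !subr_eq0 !gt_eqF // (lt_trans ltr01).
have lamn2_gt0 : 0 < (lam * n%:R)^-2 by rewrite invr_gt0 exprn_gt0 // mulr_gt0 ?ltr0n.
have Kinv_ge0 : 0 <= K^-1 by rewrite invr_ge0 ltW.
move=> le_sum; apply: le_trans (ler_wpM2l Kinv_ge0 (ler_wpM2l (ltW lamn2_gt0) le_sum)) _.
by rewrite le_eqVlt; apply/orP; left; apply/eqP; field; rewrite !gt_eqF // ltr0n.
Qed.

Lemma sdca_stepE A a : sdca_step x y lam bet A a =
  (fun i => a i + (i \in A)%:R * sdca_delta x y lam bet a i).
Proof.
apply/boolp.funext => i; rewrite /sdca_step /sdca_delta /slack.
by case: (i \in A); rewrite ?mul1r ?mul0r ?addr0.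
Qed.

(* One step in expectation over the batch: the mean dual increase is at least
   [b / n] times the model gain of the full update [sdca_delta], which in turn
   dominates the gain of a partial move towards the hinge subgradient. *)
Lemma mean_Dobj_sdca_step a s : in01 a -> 0 <= s <= 1 ->
  D a + b%:R / n%:R * (s * duality_gap x y lam a - bet * s ^+ 2 / (2 * lam * n%:R))
    <= K^-1 * \sum_(A in S) D (sdca_step x y lam bet A a).
Proof.
move=> a01 s01; set dl := sdca_delta x y lam bet a.
set L := \sum_i dl i * slack x y lam a i.
have nR_gt0 : 0 < n%:R :> R by rewrite ltr0n.
under eq_bigr do rewrite sdca_stepE Dobj_shift //.
rewrite sumrB big_split /= sumr_const -!mulr_sumr.
have -> : \sum_(A in S) \sum_i (i \in A)%:R * dl i * slack x y lam a i
    = \sum_(A in S) \sum_i (i \in A)%:R * (dl i * slack x y lam a i).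
  by apply: eq_bigr => A _; apply: eq_bigr => i _; rewrite mulrA.
rewrite sum_batches_lin // -/L.
set Wt := \sum_(A in S) _.
have -> : K^-1 * (D a *+ #|S| + n%:R^-1 * (K * b%:R / n%:R * L) - lam / 2 * Wt) =
    D a + b%:R / n%:R * (n%:R^-1 * L) - lam / 2 * (K^-1 * Wt).
  by rewrite -mulr_natr; field; rewrite !gt_eqF.
have box i : - a i <= s * hinge_direction x y lam a i <= 1 - a i.
  have /andP[a0 a1] := a01 i; have /andP[s0 s1] := s01.
  rewrite /hinge_direction; case: (0 < _)%R; rewrite /= ?mulr1n ?mulr0n.
    by apply/andP; split; nra.
  by apply/andP; split; nra.
have model_ge := le_trans (dual_model_hinge_direction x y lam_gt0 n_gt0 bet_gt0 a01 s01)
  (dual_model_le_delta x y lam_gt0 n_gt0 bet_gt0 box).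
have eso := expected_separable_overapprox dl.
have : lam / 2 * (K^-1 * Wt) <= b%:R / n%:R * (bet / (2 * lam * n%:R ^+ 2) * \sum_i dl i ^+ 2).
  have lam2_ge0 : 0 <= lam / 2 by rewrite divr_ge0 // ltW.
  apply: le_trans (ler_wpM2l lam2_ge0 eso) _.
  by rewrite le_eqVlt; apply/orP; left; apply/eqP; field; rewrite !gt_eqF.
have bn_ge0 : 0 <= b%:R / n%:R :> R by rewrite divr_ge0 ?ler0n.
have := ler_wpM2l bn_ge0 model_ge; rewrite /dual_model -/dl -/L.
lra.
Qed.

End Progress.

Section Expectation.
Variables (R : realType) (n b T : nat).
Hypothesis b_le_n : (b <= n)%N.
Local Notation BS := (batch_seqs n b T).
Local Notation S := (batches n b).
Local Notation E := (@Expect R n b T).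
Local Notation K := (#|S|%:R : R).
Local Notation seqT := {ffun 'I_T -> {set 'I_n}}.

Lemma card_batch_seqs_gt0 : (0 < #|BS|)%N.
Proof.
have /card_gt0P[A0 A0_in] := card_batches_gt0 b_le_n.
apply/card_gt0P; exists [ffun=> A0]; rewrite inE; apply/forallP => k.
by rewrite ffunE; rewrite inE in A0_in.
Qed.

Lemma ler_Expect f g : (forall s, f s <= g s) -> E f <= E g.
Proof. by move=> le_fg; rewrite /Expect ler_wpM2l ?invr_ge0 ?ler0n ?ler_sum. Qed.

Lemma ExpectD f g : E (fun s => f s + g s) = E f + E g.
Proof. by rewrite /Expect big_split mulrDr. Qed.

Lemma ExpectZ c f : E (fun s => c * f s) = c * E f.
Proof. by rewrite /Expect -mulr_sumr mulrCA. Qed.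

Lemma ExpectB f g : E (fun s => f s - g s) = E f - E g.
Proof. by rewrite /Expect sumrB mulrBr. Qed.

Lemma Expect_cst c : E (fun=> c) = c.
Proof.
rewrite /Expect sumr_const -(mulr_natr c) mulrCA mulVf ?mulr1 //.
by rewrite pnatr_eq0 -lt0n card_batch_seqs_gt0.
Qed.

Lemma Expect_sum (I : Type) (r : seq I) (F : I -> seqT -> R) :
  E (fun s => \sum_(t <- r) F t s) = \sum_(t <- r) E (F t).
Proof. by rewrite /Expect exchange_big mulr_sumr. Qed.

Definition set_batch (s : seqT) (k : 'I_T) (A : {set 'I_n}) : seqT :=
  [ffun j => if j == k then A else s j].

Lemma set_batchK s k A : set_batch (set_batch s k A) k (s k) = s.
Proof. by apply/ffunP => j; rewrite !ffunE; case: eqP => // ->. Qed.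

Lemma set_batch_id s k A : set_batch s k A k = A.
Proof. by rewrite ffunE eqxx. Qed.

Lemma set_batch_in s k A :
  (set_batch s k A \in BS) && (s k \in S) = (s \in BS) && (A \in S).
Proof.
rewrite !inE; apply/andP/andP => [[/forallP sA sk]|[/forallP sS AS]].
  split; last by have := sA k; rewrite set_batch_id.
  apply/forallP => j; have := sA j; rewrite ffunE.
  by case: (eqVneq j k) => [-> _|_ //]; exact: sk.
split; last exact: sS.
by apply/forallP => j; rewrite ffunE; case: ifP => _; [exact: AS | exact: sS].
Qed.

(* The batches are independent: resampling coordinate [k] does not change
   the law, so a function of [s k] and of the other coordinates can be
   averaged over [s k] alone. *)
Lemma Expect_resample k (Psi : seqT -> {set 'I_n} -> R) :
  (forall s A A', Psi (set_batch s k A') A = Psi s A) ->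
  E (fun s => Psi s (s k)) = E (fun s => K^-1 * \sum_(A in S) Psi s A).
Proof.
move=> Psi_indep; rewrite /Expect; congr (_ * _); rewrite -mulr_sumr.
have K_neq0 : K != 0 by rewrite pnatr_eq0 -lt0n card_batches_gt0.
apply: (mulfI K_neq0); rewrite mulrA mulfV // mul1r.
rewrite (pair_big (mem BS) (mem S)) /=.
pose swap (p : seqT * {set 'I_n}) := (set_batch p.1 k p.2, p.1 k).
have swap_inj : injective swap.
  by apply: (can_inj (g := swap)) => -[s A]; rewrite /swap /= set_batchK set_batch_id.
rewrite (reindex_inj swap_inj) /=.
rewrite (eq_big (fun p => (p.1 \in BS) && (p.2 \in S)) (fun p => Psi p.1 (p.1 k))).
- rewrite -(pair_big (mem BS) (mem S) (fun s A => Psi s (s k))) /= mulr_sumr.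
  by apply: eq_bigr => s _; rewrite sumr_const mulr_natl.
- by move=> [s A] /=; rewrite set_batch_in.
- by move=> [s A] /= _; rewrite Psi_indep.
Qed.

End Expectation.

Section Iterates.
Variables (R : realType) (n d : nat) (x : 'I_n -> 'rV[R]_d) (y : 'I_n -> R).
Variables (lam sigma : R) (b T : nat).
Local Notation bet := (beta n b sigma).
Local Notation seqT := {ffun 'I_T -> {set 'I_n}}.
Local Notation E := (@Expect R n b T).

Definition sdca_iter (s : seqT) t := alpha_it x y lam bet (batch_of s) t.

Lemma batch_of_ord (s : seqT) (k : 'I_T) : batch_of s k = s k.
Proof.
rewrite /batch_of (insubT (fun k => k < T)%N (ltn_ord k)) /=.
by congr (s _); apply: val_inj.
Qed.

Lemma batch_of_set_batch (s : seqT) (k : 'I_T) A (j : nat) : j != k ->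
  batch_of (set_batch s k A) j = batch_of s j.
Proof.
move=> jk; rewrite /batch_of; case: insubP => // j' _ j'j.
by rewrite ffunE; case: eqP => // j'k; move: jk; rewrite -j'j j'k eqxx.
Qed.

Lemma sdca_iter_set_batch (s : seqT) (k : 'I_T) A t : (t <= k)%N ->
  sdca_iter (set_batch s k A) t = sdca_iter s t.
Proof.
elim: t => [|t IH] lt_tk; first by [].
rewrite /sdca_iter /= -/(sdca_iter _ t) -/(sdca_iter s t) IH; last exact: ltnW.
by rewrite batch_of_set_batch // neq_ltn lt_tk.
Qed.

Lemma sdca_iter_in01 s t : in01 (sdca_iter s t).
Proof.
rewrite /sdca_iter; elim: t => [|t IH] i /=; first by rewrite lexx ler01.
rewrite /sdca_step; case: (i \in _) => //; have /andP[a0 a1] := IH i.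
set a := alpha_it _ _ _ _ _ t.
have box_ne : - a i <= 1 - a i by lra.
by have /andP[? ?] := clip_in (lam * n%:R * (1 - y i * dotv (wof x y lam a) (x i)) / bet) box_ne;
  apply/andP; split; lra.
Qed.

Lemma alpha_bar_in01 T0 (s : seqT) : (T0 < T)%N ->
  in01 (alpha_bar x y lam bet T0 s).
Proof.
move=> lt_T0T; apply: (in01_mean (mean_weight_iota R lt_T0T) (a := sdca_iter s)) => t.
exact: sdca_iter_in01.
Qed.

Hypotheses (lam_gt0 : 0 < lam) (n_gt1 : (1 < n)%N).
Hypothesis b_le_n : (b <= n)%N.
Hypotheses (y2 : forall i, y i ^+ 2 = 1) (x_le1 : forall i, dotv (x i) (x i) <= 1).
Hypothesis spec_le : specnorm (Xmat x) ^+ 2 <= n%:R * sigma ^+ 2.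
Hypothesis bet_gt0 : 0 < bet.

Lemma Expect_Dobj_succ t s : (t < T)%N -> 0 <= s <= 1 ->
  E (fun q => Dobj x y lam (sdca_iter q t))
  + b%:R / n%:R * (s * E (fun q => duality_gap x y lam (sdca_iter q t))
                   - bet * s ^+ 2 / (2 * lam * n%:R))
  <= E (fun q => Dobj x y lam (sdca_iter q t.+1)).
Proof.
move=> lt_tT s01; set k := Ordinal lt_tT.
have -> : E (fun q => Dobj x y lam (sdca_iter q t.+1)) =
    E (fun q => Dobj x y lam (sdca_step x y lam bet (q k) (sdca_iter q t))).
  rewrite /Expect; congr (_ * _); apply: eq_bigr => q _.
  by rewrite /sdca_iter /= -(batch_of_ord q k).
rewrite (Expect_resample b_le_n
  (Psi := fun q A => Dobj x y lam (sdca_step x y lam bet A (sdca_iter q t)))); last first.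
  by move=> q A A'; rewrite sdca_iter_set_batch.
rewrite -ExpectZ -(Expect_cst T b_le_n (bet * s ^+ 2 / _)) -ExpectB -ExpectZ -ExpectD.
apply: ler_Expect => q.
exact: (mean_Dobj_sdca_step lam_gt0 n_gt1 b_le_n y2 x_le1 spec_le bet_gt0
  (sdca_iter_in01 q t) s01).
Qed.

End Iterates.

Lemma exprn_one_sub_le (R : realType) (p z : R) t : 0 <= p <= 1 -> 0 < z ->
  ln z <= p * t%:R -> (1 - p) ^+ t <= z^-1.
Proof.
move=> /andP[p_ge0 p_le1] z_gt0 ln_le.
have le_expR : 1 - p <= expR (- p) by have := expR_ge1Dx (- p); lra.
have : (1 - p) ^+ t <= expR (- p) ^+ t.
  by rewrite lerXn2r ?nnegrE ?(ltW (expR_gt0 _)) //; lra.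
move/le_trans; apply; rewrite -expRM_natl -[z^-1]lnK ?posrE ?invr_gt0 //.
by rewrite ler_expR lnV ?posrE //; lra.
Qed.


Section Rates.
Variables (R : realType) (n d : nat) (x : 'I_n -> 'rV[R]_d) (y : 'I_n -> R).
Variables (lam sigma : R) (b T : nat) (wstar : 'rV[R]_d).
Hypotheses (lam_gt0 : 0 < lam) (n_gt1 : (1 < n)%N).
Hypotheses (b_ge1 : (1 <= b)%N) (b_le_n : (b <= n)%N).
Hypotheses (y2 : forall i, y i ^+ 2 = 1) (x_le1 : forall i, dotv (x i) (x i) <= 1).
Hypothesis spec_le : specnorm (Xmat x) ^+ 2 <= n%:R * sigma ^+ 2.
Local Notation bet := (beta n b sigma).
Hypothesis bet_gt0 : 0 < bet.
Hypothesis wstar_opt : forall w, Pobj x y lam wstar <= Pobj x y lam w.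

Local Notation E := (@Expect R n b T).
Local Notation D := (Dobj x y lam).
Local Notation P := (Pobj x y lam).
Local Notation iter := (sdca_iter x y lam sigma b).
Local Notation p := (b%:R / n%:R : R).
Local Notation K2 := (bet / (2 * lam * n%:R)).

Let n_gt0 : (0 < n)%N. Proof. exact: ltn_trans n_gt1. Qed.
Let nR_gt0 : 0 < n%:R :> R. Proof. by rewrite ltr0n. Qed.
Let bR_gt0 : 0 < b%:R :> R. Proof. by rewrite ltr0n. Qed.
Let p_ge0 : 0 <= p. Proof. by rewrite divr_ge0 ?ler0n. Qed.
Let p_le1 : p <= 1. Proof. by rewrite ler_pdivrMr // mul1r ler_nat. Qed.
Let K2_gt0 : 0 < K2. Proof. by rewrite divr_gt0 // !mulr_gt0. Qed.

Definition dual_subopt t := P wstar - E (fun s => D (iter s t)).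
Definition mean_gap t := E (fun s => duality_gap x y lam (iter s t)).

Lemma dual_subopt_ge0 t : 0 <= dual_subopt t.
Proof.
rewrite subr_ge0 -(Expect_cst T b_le_n (P wstar)); apply: ler_Expect => s.
exact: Dobj_le_Pobj (sdca_iter_in01 _ _ _ _ _ _ _).
Qed.

Lemma dual_subopt_le_mean_gap t : dual_subopt t <= mean_gap t.
Proof.
rewrite /dual_subopt /mean_gap -(Expect_cst T b_le_n (P wstar)) -ExpectB.
by apply: ler_Expect => s; rewrite lerD2r.
Qed.

Lemma dual_subopt_succ_le t s : (t < T)%N -> 0 <= s <= 1 ->
  dual_subopt t.+1 <= dual_subopt t - p * (s * mean_gap t - bet * s ^+ 2 / (2 * lam * n%:R)).
Proof.
move=> lt_tT s01.
have := Expect_Dobj_succ lam_gt0 n_gt1 b_le_n y2 x_le1 spec_le bet_gt0 lt_tT s01.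
by rewrite /dual_subopt /mean_gap; lra.
Qed.

(* At [alpha = 0] the dual objective vanishes and [P 0 = 1]. *)
Lemma dual_subopt0_le1 : dual_subopt 0 <= 1.
Proof.
have D0 : E (fun s => D (iter s 0)) = 0.
  rewrite -(Expect_cst T b_le_n 0) /Expect; congr (_ * _); apply: eq_bigr => s _.
  rewrite /Dobj /= big1 ?mulr0 ?add0r => [|i _]; last by rewrite big1 // => j _; rewrite !mul0r.
  by rewrite big1 ?mulr0.
have P0 : P 0 = 1.
  rewrite /Pobj /normv dotv0l sqrtr0 expr0n /= mulr0 addr0.
  rewrite (eq_bigr (fun=> 1)) => [|i _]; last by rewrite dotv0l mulr0 subr0 /Num.max ltr01.
  by rewrite sumr_const card_ord -(mulr_natr 1) mul1r mulVf // gt_eqF.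
by have := wstar_opt 0; rewrite P0 /dual_subopt D0 subr0.
Qed.

Lemma dual_subopt_linear t : (t <= T)%N -> dual_subopt t <= (1 - p) ^+ t + K2.
Proof.
have K2_pos := K2_gt0; elim: t => [|t IH] le_tT.
  by rewrite expr0; have := dual_subopt0_le1; lra.
have s01 : 0 <= (1 : R) <= 1 by rewrite ler01 lexx.
have := dual_subopt_succ_le le_tT s01; rewrite mul1r expr1n mulr1.
have := ler_wpM2l p_ge0 (dual_subopt_le_mean_gap t).
have q_ge0 : 0 <= 1 - p by have := p_le1; lra.
have := ler_wpM2l q_ge0 (IH (ltnW le_tT)); rewrite exprS.
set e := dual_subopt t; set q := (1 - p) ^+ t.
have -> : (1 - p) * (q + K2) = (1 - p) * q + K2 - p * K2 by ring.
have -> : p * (mean_gap t - K2) = p * mean_gap t - p * K2 by ring.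
have -> : (1 - p) * e = e - p * e by ring.
lra.
Qed.

(* Between [t0] and [T0] the step size [s = 2n / (2n + b j)] yields the
   [O(1/t)] rate, by induction on [j]. *)
Lemma dual_subopt_sublinear t0 j : (t0 + j <= T)%N ->
  dual_subopt t0 <= bet / (lam * n%:R) ->
  dual_subopt (t0 + j) <= 2 * bet / (lam * (2 * n%:R + b%:R * j%:R)).
Proof.
move=> + init; elim: j => [|j IH] le_T.
  rewrite addn0 mulr0 addr0 (_ : 2 * bet / _ = bet / (lam * n%:R)) //.
  by field; rewrite !gt_eqF.
have lt_T : (t0 + j < T)%N by rewrite -addnS.
have {}IH := IH (ltnW lt_T); set m := 2 * n%:R + b%:R * j%:R in IH.
have nR := nR_gt0; have bR := bR_gt0.
have bj_ge0 : 0 <= b%:R * j%:R :> R by rewrite mulr_ge0 ?ler0n.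
have m_gt0 : 0 < m by rewrite /m; lra.
have b_le_n' : b%:R <= n%:R :> R by rewrite ler_nat.
set s := 2 * n%:R / m.
have s01 : 0 <= s <= 1.
  apply/andP; split; first by rewrite divr_ge0 //; lra.
  by rewrite ler_pdivrMr // mul1r /m; lra.
have ps : p * s = 2 * b%:R / m by rewrite /s; field; rewrite !gt_eqF.
have ps_le1 : p * s <= 1 by rewrite ps ler_pdivrMr // mul1r /m; lra.
have := dual_subopt_succ_le lt_T s01; rewrite addnS.
have := ler_wpM2l (mulr_ge0 p_ge0 (proj1 (andP s01))) (dual_subopt_le_mean_gap (t0 + j)).
have := ler_wpM2l (_ : 0 <= 1 - p * s) IH; rewrite subr_ge0 => /(_ ps_le1).
have -> : 2 * n%:R + b%:R * j.+1%:R = m + b%:R by rewrite /m -addn1 natrD; ring.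
have key : (1 - p * s) * (2 * bet / (lam * m)) + p * bet * s ^+ 2 / (2 * lam * n%:R)
    = 2 * bet / (lam * (m + b%:R)) - 2 * bet * b%:R ^+ 2 / (lam * m ^+ 2 * (m + b%:R)).
  by rewrite /s; field; rewrite !gt_eqF //; lra.
have gain_ge0 : 0 <= 2 * bet * b%:R ^+ 2 / (lam * m ^+ 2 * (m + b%:R)).
  by rewrite divr_ge0 // ?mulr_ge0 ?sqr_ge0 ?(ltW bet_gt0) ?(ltW lam_gt0) //; lra.
set e := dual_subopt (t0 + j); set g := mean_gap (t0 + j).
have -> : p * (s * g - bet * s ^+ 2 / (2 * lam * n%:R)) =
    p * s * g - p * bet * s ^+ 2 / (2 * lam * n%:R) by ring.
have -> : (1 - p * s) * e = e - p * s * e by ring.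
lra.
Qed.

Lemma sum_mean_gap_le T0 j s : 0 <= s <= 1 -> (T0 + j <= T)%N ->
  \sum_(T0 <= t < T0 + j) p * s * mean_gap t
    <= dual_subopt T0 - dual_subopt (T0 + j)
       + j%:R * (p * bet * s ^+ 2 / (2 * lam * n%:R)).
Proof.
move=> s01; elim: j => [|j IH] le_T.
  by rewrite addn0 big_geq // subrr mul0r addr0.
have lt_T : (T0 + j < T)%N by rewrite -addnS.
rewrite addnS big_nat_recr ?leq_addr //= -[j.+1]addn1 natrD mulrDl mul1r.
have := dual_subopt_succ_le lt_T s01; have := IH (ltnW lt_T).
set g := mean_gap (T0 + j).
have -> : p * (s * g - bet * s ^+ 2 / (2 * lam * n%:R)) =
    p * s * g - p * bet * s ^+ 2 / (2 * lam * n%:R) by ring.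
lra.
Qed.


Lemma Expect_gap_avg_le_mean T0 : (T0 < T)%N ->
  E (fun s => duality_gap x y lam (alpha_bar x y lam bet T0 s))
    <= (T%:R - T0%:R)^-1 * \sum_(T0 <= t < T) mean_gap t.
Proof.
move=> lt_T0T; have c_mean := mean_weight_iota R lt_T0T.
rewrite /mean_gap -Expect_sum -ExpectZ; apply: ler_Expect => s.
exact: (duality_gap_mean_le c_mean x y lam_gt0 n_gt0 (iter s)).
Qed.

(* Summing the one-step inequality over [T0 <= t < T] with the constant step
   [s = n / (b (T - T0))], for which [p s = 1 / (T - T0)]. *)
Lemma avg_mean_gap_le T0 : (T0 < T)%N -> n%:R / b%:R <= T%:R - T0%:R :> R ->
  (T%:R - T0%:R)^-1 * \sum_(T0 <= t < T) mean_gap t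
    <= dual_subopt T0 + bet / (2 * lam * b%:R * (T%:R - T0%:R)).
Proof.
move=> lt_T0T nb_le; set N := T%:R - T0%:R.
have nR := nR_gt0; have bR := bR_gt0.
have N_gt0 : 0 < N by rewrite subr_gt0 ltr_nat.
set s := n%:R / (b%:R * N).
have s01 : 0 <= s <= 1.
  apply/andP; split; first by rewrite divr_ge0 ?mulr_ge0 //; lra.
  by rewrite ler_pdivrMr ?mulr_gt0 // mul1r mulrC -ler_pdivrMr.
have := sum_mean_gap_le (T0 := T0) (j := T - T0) s01.
rewrite subnKC ?(ltnW lt_T0T) // natrB ?(ltnW lt_T0T) // -/N => /(_ (leqnn T)).
have -> : N * (p * bet * s ^+ 2 / (2 * lam * n%:R)) = bet / (2 * lam * b%:R * N).
  by rewrite /s; field; rewrite !gt_eqF.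
rewrite -mulr_sumr (_ : p * s = N^-1); last by rewrite /s; field; rewrite !gt_eqF.
by have := dual_subopt_ge0 T; lra.
Qed.

Lemma dual_subopt_le t0 T0 : (t0 <= T0 <= T)%N ->
  n%:R / b%:R * ln (2 * lam * n%:R / bet) <= t0%:R ->
  dual_subopt T0 <= 2 * bet / (lam * (2 * n%:R + b%:R * (T0%:R - t0%:R))).
Proof.
move=> /andP[le_t0T0 le_T0T] ln_le.
have nR := nR_gt0; have bR := bR_gt0; have K2_pos := K2_gt0.
have z_gt0 : 0 < 2 * lam * n%:R / bet by rewrite divr_gt0 // !mulr_gt0.
have p01 : 0 <= p <= 1 by rewrite p_ge0 p_le1.
have : ln (2 * lam * n%:R / bet) <= p * t0%:R.
  have := ler_wpM2l p_ge0 ln_le; rewrite mulrA (_ : p * (n%:R / b%:R) = 1) ?mul1r //.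
  by field; rewrite !gt_eqF.
move/(exprn_one_sub_le p01 z_gt0); rewrite invf_div => pow_le.
have init : dual_subopt t0 <= bet / (lam * n%:R).
  rewrite (_ : bet / (lam * n%:R) = K2 + K2); last by field; rewrite !gt_eqF.
  by have := dual_subopt_linear (leq_trans le_t0T0 le_T0T); lra.
have := dual_subopt_sublinear (_ : (t0 + (T0 - t0) <= T)%N) init.
by rewrite subnKC // natrB //; apply.
Qed.

Lemma Expect_gap_avg_le t0 T0 eps : 0 < eps -> (t0 <= T0)%N ->
  n%:R / b%:R * ln (2 * lam * n%:R / bet) <= t0%:R ->
  t0%:R + bet / b%:R * (4 / (lam * eps) - 2 * n%:R / bet) <= T0%:R ->
  n%:R / b%:R <= T%:R - T0%:R :> R -> bet / b%:R * (lam * eps)^-1 <= T%:R - T0%:R ->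
  E (fun s => duality_gap x y lam (alpha_bar x y lam bet T0 s)) <= eps.
Proof.
move=> eps_gt0 le_t0T0 ln_le T0_ge T_ge1 T_ge2.
have nR := nR_gt0; have bR := bR_gt0.
have nb_gt0 : 0 < n%:R / b%:R :> R by rewrite divr_gt0.
have lt_T0T : (T0 < T)%N by rewrite -(ltr_nat R); lra.
have le_T0T : (t0 <= T0 <= T)%N by rewrite le_t0T0 ltnW.
apply: le_trans (Expect_gap_avg_le_mean lt_T0T) _.
apply: le_trans (avg_mean_gap_le lt_T0T T_ge1) _.
have := dual_subopt_le le_T0T ln_le.
set m := 2 * n%:R + b%:R * (T0%:R - t0%:R); set N := T%:R - T0%:R.
have lam_eps_gt0 : 0 < lam * eps by rewrite mulr_gt0.
have m_ge : 4 * bet / (lam * eps) <= m.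
  have := ler_wpM2l (ltW bR) T0_ge; rewrite /m.
  have -> : b%:R * (t0%:R + bet / b%:R * (4 / (lam * eps) - 2 * n%:R / bet)) =
      b%:R * t0%:R + 4 * bet / (lam * eps) - 2 * n%:R by field; rewrite !gt_eqF.
  lra.
have m_gt0 : 0 < m by apply: lt_le_trans m_ge; rewrite divr_gt0 ?mulr_gt0.
have first : 2 * bet / (lam * m) <= eps / 2.
  rewrite ler_pdivrMr ?mulr_gt0 //.
  have := ler_wpM2l (ltW lam_eps_gt0) m_ge.
  have -> : lam * eps * (4 * bet / (lam * eps)) = 4 * bet by field; rewrite !gt_eqF.
  have -> : eps / 2 * (lam * m) = lam * eps * m / 2 by ring.
  lra.
have N_gt0 : 0 < N by rewrite /N; lra.
have second : bet / (2 * lam * b%:R * N) <= eps / 2.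
  rewrite ler_pdivrMr ?mulr_gt0 //.
  have := ler_wpM2l (ltW (mulr_gt0 bR lam_eps_gt0)) T_ge2.
  have -> : b%:R * (lam * eps) * (bet / b%:R * (lam * eps)^-1) = bet.
    by field; rewrite !gt_eqF.
  by have -> : eps / 2 * (2 * lam * b%:R * N) = b%:R * (lam * eps) * N by field.
lra.
Qed.
Lemma Expect_gap_avg_le_schedule t0 T0 eps : 0 < eps ->
  Num.max 0 (Num.ceil (n%:R / b%:R * ln (2 * lam * n%:R / bet)))%:~R <= (t0%:R : R) ->
  t0%:R + bet / b%:R * Num.max 0 (4 / (lam * eps) - 2 * n%:R / bet) <= (T0%:R : R) ->
  T0%:R + Num.max (Num.ceil (n%:R / b%:R : R))%:~R (bet / b%:R * (lam * eps)^-1)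
    <= (T%:R : R) ->
  (T0 < T)%N /\ E (fun s => duality_gap x y lam (alpha_bar x y lam bet T0 s)) <= eps.
Proof.
move=> eps_gt0 t0_ge T0_ge T_ge; have bR := bR_gt0.
have max_ge (u v : R) : u <= Num.max u v /\ v <= Num.max u v by rewrite !le_max !lexx orbT.
have ln_le := le_trans (ceil_ge _) (le_trans (max_ge 0 _).2 t0_ge).
have bet_b_ge0 : 0 <= bet / b%:R by rewrite divr_ge0 ?ltW.
have le_t0T0 : (t0 <= T0)%N.
  rewrite -(ler_nat R); apply: le_trans T0_ge; rewrite lerDl.
  exact: mulr_ge0 bet_b_ge0 (max_ge _ _).1.
have T0_ge' := le_trans (lerD (lexx _) (ler_wpM2l bet_b_ge0 (max_ge 0 _).2)) T0_ge.
have [ceil_le max_ge2] :=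
  max_ge (Num.ceil (n%:R / b%:R : R))%:~R (bet / b%:R * (lam * eps)^-1).
have T_ge1 : n%:R / b%:R <= T%:R - T0%:R :> R.
  by have := le_trans (ceil_ge _) ceil_le; lra.
have T_ge2 : bet / b%:R * (lam * eps)^-1 <= T%:R - T0%:R by lra.
have nb_gt0 : 0 < n%:R / b%:R :> R by rewrite divr_gt0.
split; first by rewrite -(ltr_nat R); lra.
exact: Expect_gap_avg_le eps_gt0 le_t0T0 ln_le T0_ge' T_ge1 T_ge2.
Qed.

End Rates.

Theorem theorem2 (R : realType) (n d : nat) (x : 'I_n -> 'rV[R]_d)
  (y : 'I_n -> R) (sigma lam : R) (b : nat) (eps : R) (t0 T0 T : nat)
  (wstar : 'rV[R]_d) :
  (2 <= n)%N ->
  (forall i, y i = 1 \/ y i = -1) ->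
  (forall i, normv (x i) <= 1) ->
  specnorm (Xmat x) ^+ 2 / n%:R <= sigma ^+ 2 ->
  0 < lam ->
  (1 <= b <= n)%N ->
  0 < beta n b sigma ->
  (forall w, Pobj x y lam wstar <= Pobj x y lam w) ->
  0 < eps ->
  Num.max 0 (Num.ceil (n%:R / b%:R * ln (2 * lam * n%:R / beta n b sigma)))%:~R
    <= (t0%:R : R) ->
  t0%:R + beta n b sigma / b%:R
          * Num.max 0 (4 / (lam * eps) - 2 * n%:R / beta n b sigma)
    <= (T0%:R : R) ->
  T0%:R + Num.max (Num.ceil (n%:R / b%:R : R))%:~R
                  (beta n b sigma / b%:R * (lam * eps)^-1)
    <= (T%:R : R) ->
  let bet := beta n b sigma in
  let abar := @alpha_bar R n d x y lam bet T0 T in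
  @Expect R n b T (fun s => Pobj x y lam (wof x y lam (abar s))) - Pobj x y lam wstar
    <= @Expect R n b T (fun s => Pobj x y lam (wof x y lam (abar s))
                              - Dobj x y lam (abar s))
  /\ @Expect R n b T (fun s => Pobj x y lam (wof x y lam (abar s))
                            - Dobj x y lam (abar s)) <= eps.
Proof.
move=> n_gt1 y_pm1 x_le1 spec_le lam_gt0 /andP[b_ge1 b_le_n] bet_gt0 wstar_opt eps_gt0
  t0_ge T0_ge T_ge bet abar.
have y2 i : y i ^+ 2 = 1 by case: (y_pm1 i) => ->; rewrite ?sqrrN expr1n.
have dotx_le1 i : dotv (x i) (x i) <= 1.
  by rewrite -normv_sqr; have := x_le1 i; have : 0 <= normv (x i) := sqrtr_ge0 _; nra.
have spec_le' : specnorm (Xmat x) ^+ 2 <= n%:R * sigma ^+ 2.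
  by rewrite mulrC -ler_pdivrMr // ltr0n ltnW.
have [lt_T0T gap_le] := Expect_gap_avg_le_schedule lam_gt0 n_gt1 b_ge1 b_le_n y2
  dotx_le1 spec_le' bet_gt0 wstar_opt eps_gt0 t0_ge T0_ge T_ge.
split=> //; rewrite ExpectB lerD2l lerN2 -(Expect_cst T b_le_n (Pobj x y lam wstar)).
apply: ler_Expect => s; apply: (Dobj_le_Pobj x y lam_gt0 (ltnW n_gt1)).
exact: alpha_bar_in01.
Qed.
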